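(* Let $U\subsetneq(0,\pi)$ be an open set. Then for every $\varepsilon>0$ there exists $M=M(\varepsilon)>0$ such that for any $A\in SL_2(\mathbb R)$ satisfying $\varphi_A(U)\subset U$ and $\|A\|>M$, we have $(t_A-\varepsilon,t_A+\varepsilon)\not\subset U$.
   Context: $\mathbb{RP}^1$ is identified with $[0,\pi)\cong\mathbb R/\pi\mathbb Z$ (angle $\theta$ corresponds to the line through $(\cos\theta,\sin\theta)$), and $\varphi_A$ is the induced action of $A$ on it. For $A\in SL_2(\mathbb R)$, $t_A\in[0,\pi)$ is defined by: $(\cos t_A,\sin t_A)^{\mathrm t}$ is a unit eigenvector of $A^*A$ for its eigenvalue $\|A\|^{-2}$. *)

From HB Require Import structures.
From mathcomp Require Import all_boot all_order all_algebra.
From mathcomp Require Import all_classical all_reals all_analysis.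
Set Implicit Arguments. Unset Strict Implicit. Unset Printing Implicit Defensive.
Import Order.TTheory GRing.Theory Num.Theory.
Local Open Scope classical_set_scope.
Local Open Scope ring_scope.

Section Defs.
Variable R : realType.

Definition vec2 (x y : R) : 'cV[R]_2 := \col_(i < 2) [:: x; y]`_i.

Definition enorm (v : 'cV[R]_2) : R := Num.sqrt (v 0 0 ^+ 2 + v 1 0 ^+ 2).

Definition opnorm (A : 'M[R]_2) : R :=
  sup [set enorm (A *m v) | v in [set v : 'cV[R]_2 | enorm v = 1]].

Definition ang (t : R) : 'cV[R]_2 := vec2 (cos t) (sin t).

(* t in [0,pi) is the angle (point of RP^1 = [0,pi)) of the line spanned by v *)
Definition line_angle (v : 'cV[R]_2) (t : R) : Prop :=
  0 <= t < pi /\ exists r : R, v = r *: ang t.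

(* phi_A(U) is contained in U, phi_A being the induced action on RP^1 *)
Definition maps_into (A : 'M[R]_2) (U : set R) : Prop :=
  forall th, U th -> forall th', line_angle (A *m ang th) th' -> U th'.

Definition is_tA (A : 'M[R]_2) (t : R) : Prop :=
  0 <= t < pi /\ (A^T *m A) *m ang t = (opnorm A ^- 2) *: ang t.

End Defs.

From HB Require Import structures.
From mathcomp Require Import all_boot all_order all_algebra.
From mathcomp Require Import all_classical all_reals all_analysis.
From mathcomp Require Import ring lra.
Set Implicit Arguments. Unset Strict Implicit. Unset Printing Implicit Defensive.
Import Order.TTheory GRing.Theory Num.Theory.
Import numFieldTopology.Exports.
Local Open Scope classical_set_scope.
Local Open Scope ring_scope.

(* Write u_s = (cos s, sin s), a = A u_t and b = A u_(t + pi/2).  As u_t is an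
   eigenvector of A^T A for ||A||^-2 and det A = 1, the vectors a and b are
   orthogonal with |a| = 1/||A|| and |b| = ||A||, and
   A u_(t+s) = cos s a + sin s b.  Both 0 and some p in (0,pi) lie outside U,
   and no vector is nearly parallel to both u_0 and u_p, so some phi outside U
   has |u_phi x b| of order ||A||, while |u_phi x a| <= 1/||A||.  Hence for
   ||A|| large, A u_(t+s) is parallel to u_phi for
   s = atan (- (u_phi x a) / (u_phi x b)), and |s| < eps: if (t - eps, t + eps)
   lay in U, phi_A would map t + s in U to phi outside U. *)

Section Plane.
Variable R : realType.
Implicit Types (u v w : 'cV[R]_2) (A : 'M[R]_2) (a b e p t s phi : R).

Definition dot2 u v := u 0 0 * v 0 0 + u 1 0 * v 1 0.
Definition cross2 u v := u 0 0 * v 1 0 - u 1 0 * v 0 0.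

Let lift01 : lift ord0 ord0 = 1 :> 'I_2. Proof. exact: val_inj. Qed.

Lemma mulmx2E m n (A : 'M[R]_(m, 2)) (B : 'M[R]_(2, n)) i j :
  (A *m B) i j = A i 0 * B 0 j + A i 1 * B 1 j.
Proof. by rewrite mxE !big_ord_recl big_ord0 addr0 lift01. Qed.

Lemma det_mx22 A : \det A = A 0 0 * A 1 1 - A 0 1 * A 1 0.
Proof.
rewrite (expand_det_row _ 0) !big_ord_recl big_ord0 addr0 /cofactor !det_mx11.
rewrite !mxE /= lift01 (_ : lift 1 ord0 = 0); last exact: val_inj.
by rewrite expr0 expr1 mul1r mulN1r mulrN.
Qed.

Lemma cV2_eq u v : u 0 0 = v 0 0 -> u 1 0 = v 1 0 -> u = v.
Proof.
move=> e0 e1; apply/colP => i.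
have [->|->] : i = 0 \/ i = 1.
  by case: i => -[|[|//]] ?; [left | right]; apply: val_inj.
all: by [].
Qed.

Lemma ang00 t : ang t 0 0 = cos t. Proof. by rewrite !mxE. Qed.
Lemma ang10 t : ang t 1 0 = sin t. Proof. by rewrite !mxE. Qed.

Lemma dot2C u v : dot2 u v = dot2 v u.
Proof. by rewrite /dot2 mulrC [u 1 0 * _]mulrC. Qed.

Lemma dot2Zr u v a : dot2 u (a *: v) = a * dot2 u v.
Proof. by rewrite /dot2 !mxE; ring. Qed.

Lemma cross2_linear u v w a b :
  cross2 u (a *: v + b *: w) = a * cross2 u v + b * cross2 u w.
Proof. by rewrite /cross2 !mxE; ring. Qed.

Lemma dot2_mulmx A u v : dot2 (A *m u) (A *m v) = dot2 u ((A^T *m A) *m v).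
Proof. by rewrite /dot2 !mulmx2E !mxE; ring. Qed.

Lemma cross2_mulmx A u v : cross2 (A *m u) (A *m v) = \det A * cross2 u v.
Proof. by rewrite /cross2 det_mx22 !mulmx2E; ring. Qed.

Lemma dot2_cross2_sqr u v :
  dot2 u u * dot2 v v = dot2 u v ^+ 2 + cross2 u v ^+ 2.
Proof. by rewrite /dot2 /cross2; ring. Qed.

Lemma dot2_ang t : dot2 (ang t) (ang t) = 1.
Proof. by rewrite /dot2 !ang00 !ang10 -!expr2 cos2Dsin2. Qed.

Lemma dot2_ang_pihalf t : dot2 (ang t) (ang (t + pi / 2)) = 0.
Proof. by rewrite /dot2 !ang00 !ang10 cosDpihalf sinDpihalf; ring. Qed.

Lemma cross2_ang_pihalf t : cross2 (ang t) (ang (t + pi / 2)) = 1.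
Proof.
by rewrite /cross2 !ang00 !ang10 cosDpihalf sinDpihalf -(cos2Dsin2 t); ring.
Qed.

Lemma angD t s : ang (t + s) = cos s *: ang t + sin s *: ang (t + pi / 2).
Proof.
by apply: cV2_eq; rewrite !mxE /= ?cosDpihalf ?sinDpihalf ?cosD ?sinD; ring.
Qed.

Lemma line_angle_cross2 v phi :
  0 <= phi < pi -> cross2 (ang phi) v = 0 -> line_angle v phi.
Proof.
move=> phi_range v_phi; split=> //; exists (dot2 (ang phi) v).
move: v_phi; rewrite /cross2 /dot2 !ang00 !ang10 => v_phi.
have cs := cos2Dsin2 phi.
apply: cV2_eq; rewrite !mxE /=.
- transitivity (v 0 0 * (cos phi ^+ 2 + sin phi ^+ 2)
                + sin phi * (cos phi * v 1 0 - sin phi * v 0 0)).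
    by rewrite cs v_phi; ring.
  by ring.
- transitivity (v 1 0 * (cos phi ^+ 2 + sin phi ^+ 2)
                - cos phi * (cos phi * v 1 0 - sin phi * v 0 0)).
    by rewrite cs v_phi; ring.
  by ring.
Qed.

Lemma cross2_ang_sqr_le phi v : cross2 (ang phi) v ^+ 2 <= dot2 v v.
Proof.
by rewrite -[dot2 v v]mul1r -(dot2_ang phi) dot2_cross2_sqr lerDr sqr_ge0.
Qed.

Lemma exists_cross2_ang_sqr_ge p v : exists2 phi, phi = 0 \/ phi = p &
  sin p ^+ 2 * dot2 v v <= 6 * cross2 (ang phi) v ^+ 2.
Proof.
have sum_ge : sin p ^+ 2 * dot2 v v <=
    3 * (cross2 (ang 0) v ^+ 2 + cross2 (ang p) v ^+ 2).
  rewrite /cross2 /dot2 !ang00 !ang10 cos0 sin0 mul1r mul0r subr0.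
  set b := cos p * v 1 0 - sin p * v 0 0.
  have cs := cos2Dsin2 p.
  have sin_v0 : sin p * v 0 0 = cos p * v 1 0 - b by rewrite /b; ring.
  have : (sin p * v 0 0) ^+ 2 <= 2 * (v 1 0) ^+ 2 + 2 * b ^+ 2.
    by rewrite sin_v0; have := sqr_ge0 (cos p * v 1 0 + b); nra.
  nra.
case: (leP (cross2 (ang 0) v ^+ 2) (cross2 (ang p) v ^+ 2)) => ?.
- by exists p; [right | lra].
- by exists 0; [left | lra].
Qed.

Lemma tan_gt0_pihalf e : 0 < e < pi / 2 -> 0 < tan e.
Proof.
move=> e_range; rewrite divr_gt0 ?sin_gt0_pihalf // cos_gt0_pihalf //.
case/andP: e_range => e_gt0 ->; rewrite andbT (lt_trans _ e_gt0) //.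
by rewrite oppr_lt0 divr_gt0 ?pi_gt0.
Qed.

Lemma cos_sin_root e a b : 0 < e < pi / 2 -> a ^+ 2 < tan e ^+ 2 * b ^+ 2 ->
  exists2 s, - e < s < e & cos s * a + sin s * b = 0.
Proof.
move=> /andP[e_gt0 e_lt] ab.
have b_neq0 : b != 0.
  by apply: contraTneq ab => ->; rewrite expr0n mulr0 -leNgt sqr_ge0.
have tan_gt0 : 0 < tan e by rewrite tan_gt0_pihalf ?e_gt0.
have e_in : e \in `](- (pi / 2)), (pi / 2)[.
  by rewrite in_itv /= e_lt andbT (lt_trans _ e_gt0) // oppr_lt0 divr_gt0 ?pi_gt0.
pose x := - (a / b).
have x_sqr : x ^+ 2 < tan e ^+ 2.
  have b2_gt0 : 0 < b ^+ 2 by rewrite lt_def sqrf_eq0 b_neq0 sqr_ge0.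
  by rewrite sqrrN expr_div_n ltr_pdivrMr.
have [x_gt x_lt] : - tan e < x /\ x < tan e by split; nra.
exists (atan x).
  by rewrite -(tanK e_in) -atanN; apply/andP; split; apply: lt_atan.
have cos_neq0 : cos (atan x) != 0.
  by rewrite cos_atan invr_eq0 gt_eqF // sqrtr_gt0 ltr_pwDl ?sqr_ge0.
have -> : sin (atan x) = x * cos (atan x) by rewrite -{2}(atanK x) /tan divfK.
have xb : x * b = - a by rewrite /x mulNr divfK.
by rewrite mulrAC xb mulNr mulrC subrr.
Qed.

Lemma eigen_frame A t x : x != 0 -> \det A = 1 ->
    (A^T *m A) *m ang t = x ^- 2 *: ang t ->
  dot2 (A *m ang t) (A *m ang t) = x ^- 2 /\
  dot2 (A *m ang (t + pi / 2)) (A *m ang (t + pi / 2)) = x ^+ 2.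
Proof.
move=> x_neq0 detA eig; set a := A *m ang t; set b := A *m ang (t + pi / 2).
have aa : dot2 a a = x ^- 2 by rewrite dot2_mulmx eig dot2Zr dot2_ang mulr1.
have ab : dot2 a b = 0.
  by rewrite dot2C dot2_mulmx eig dot2Zr dot2C dot2_ang_pihalf mulr0.
have : dot2 a a * dot2 b b = 1.
  rewrite dot2_cross2_sqr ab cross2_mulmx detA cross2_ang_pihalf.
  by rewrite expr0n mul1r expr1n add0r.
have x2_neq0 : x ^- 2 != 0 by rewrite invr_eq0 expf_neq0.
by rewrite aa => /(canRL (mulKf x2_neq0)); rewrite mulr1 invrK.
Qed.

Lemma maps_into_nbhs_cross2 A U t e phi : maps_into A U -> 0 < e < pi / 2 ->
  (forall s, - e < s < e -> U (t + s)) -> 0 <= phi < pi ->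
  cross2 (ang phi) (A *m ang t) ^+ 2 <
    tan e ^+ 2 * cross2 (ang phi) (A *m ang (t + pi / 2)) ^+ 2 ->
  U phi.
Proof.
move=> AU e_range Ut phi_range small.
have [s s_small root] := cos_sin_root e_range small.
apply: (AU (t + s) (Ut s s_small)); apply: line_angle_cross2 => //.
by rewrite angD mulmxDr -!scalemxAr cross2_linear.
Qed.

Lemma invr_sqr_lt (k x : R) : 0 < k -> 1 + k^-1 < x -> x ^- 2 < k * x ^+ 2.
Proof.
move=> k_gt0 x_gt.
have x_gt1 : 1 < x by rewrite (le_lt_trans _ x_gt) // lerDl invr_ge0 ltW.
have kx_gt1 : 1 < k * x.
  have : k * (1 + k^-1) < k * x by rewrite ltr_pM2l.
  by rewrite mulrDr mulr1 mulfV ?gt_eqF // => ?; lra.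
have x2_gt1 : 1 < x ^+ 2 by nra.
have kx2_gt1 : 1 < k * x ^+ 2 by rewrite expr2 mulrA; nra.
by rewrite -div1r ltr_pdivrMr ?(lt_trans _ x2_gt1) //; nra.
Qed.

End Plane.

Theorem lemma3p3 (R : realType) (U : set R) :
  open U -> U `<` [set x : R | 0 < x < pi] ->
  forall eps : R, 0 < eps ->
  exists M : R, 0 < M /\
    forall (A : 'M[R]_2) (t : R),
      \det A = 1 -> maps_into A U -> M < opnorm A -> is_tA A t ->
      ~ ([set x : R | t - eps < x < t + eps] `<=` U).
Proof.
move=> _ [U_sub U_neq] eps eps_gt0.
have [p [p_range Up]] := nonsubset U_neq.
have U0 : ~ U 0 by move=> /U_sub /=; rewrite ltxx.
pose e := Num.min eps (pi / 4).
have e_range : 0 < e < pi / 2.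
  have pi_gt0 := pi_gt0 R.
  by rewrite lt_min eps_gt0 /= (@le_lt_trans _ _ (pi / 4)) ?ge_min ?lexx ?orbT; lra.
pose k := tan e ^+ 2 * sin p ^+ 2 / 6.
have k_gt0 : 0 < k.
  by rewrite /k divr_gt0 // mulr_gt0 // exprn_gt0 ?tan_gt0_pihalf ?sin_gt0_pi.
have M_gt0 : 0 < 1 + k^-1 by rewrite ltr_wpDr ?invr_ge0 ?ltW.
exists (1 + k^-1); split => // A t detA AU M_lt [_ eig] sub.
have Ut : forall s, - e < s < e -> U (t + s).
  have : e <= eps by rewrite ge_min lexx.
  by move=> ? s /andP[? ?]; apply: sub => /=; apply/andP; split; lra.
have [aa bb] := eigen_frame (lt0r_neq0 (lt_trans M_gt0 M_lt)) detA eig.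
set b := A *m ang (t + pi / 2) in bb.
have [phi phi_0p b_phi] := exists_cross2_ang_sqr_ge p b.
have [phi_range Uphi] : 0 <= phi < pi /\ ~ U phi.
  case/andP: p_range => p_gt0 p_ltpi.
  by case: phi_0p => ->; split; rewrite // ?lexx ?pi_gt0 ?(ltW p_gt0).
apply: Uphi; apply: (maps_into_nbhs_cross2 AU e_range Ut phi_range).
apply: (le_lt_trans (cross2_ang_sqr_le _ _)); rewrite aa.
apply: (lt_le_trans (invr_sqr_lt k_gt0 M_lt)).
rewrite -bb (_ : k * _ = tan e ^+ 2 * (sin p ^+ 2 * dot2 b b / 6)).
  by rewrite ler_wpM2l ?sqr_ge0 // ler_pdivrMr //; lra.
by rewrite /k; ring.
Qed.
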